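(* Let $N\ge 1$ and let $\lambda,\mu$ be complex parameters. Consider fields $x,\widetilde{x},\widehat{x},\widehat{\widetilde{x}}\in\mathbb{C}^N$ with indices taken modulo $N$. Suppose that $x,\widetilde{x},\widehat{x}$ satisfy, for all $k$, $$(E)\qquad (\widetilde{x}_k-x_k)(\lambda+x_k-\widetilde{x}_{k-1})=(\widehat{x}_k-x_k)(\mu+x_k-\widehat{x}_{k-1}).$$ Consider the superposition formulas $$(S1)\qquad (\widehat{\widetilde{x}}_k-\widehat{x}_k)(\lambda+x_{k+1}-\widetilde{x}_k)=(\widehat{\widetilde{x}}_k-\widetilde{x}_k)(\mu+x_{k+1}-\widehat{x}_k),$$ $$(S2)\qquad (\widetilde{x}_{k+1}-x_{k+1})(\lambda+\widehat{x}_{k+1}-\widehat{\widetilde{x}}_k)=(\widehat{x}_{k+1}-x_{k+1})(\mu+\widetilde{x}_{k+1}-\widehat{\widetilde{x}}_k).$$ Then, by virtue of $(E)$, (S1) and (S2) are equivalent, and if $\widehat{\widetilde{x}}$ is defined by either of them, then for all $k$: $$(E_1)\quad (\widetilde{x}_k-x_k)(\lambda+x_{k+1}-\widetilde{x}_k)=(\widehat{\widetilde{x}}_k-\widetilde{x}_k)(\mu+\widetilde{x}_k-\widehat{\widetilde{x}}_{k-1}),$$ $$(E_2)\quad (\widehat{x}_k-x_k)(\mu+x_{k+1}-\widehat{x}_k)=(\widehat{\widetilde{x}}_k-\widehat{x}_k)(\lambda+\widehat{x}_k-\widehat{\widetilde{x}}_{k-1}),$$ $$(E_{12})\quad (\w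idehat{\widetilde{x}}_k-\widehat{x}_k)(\lambda+\widehat{x}_{k+1}-\widehat{\widetilde{x}}_k)=(\widehat{\widetilde{x}}_k-\widetilde{x}_k)(\mu+\widetilde{x}_{k+1}-\widehat{\widetilde{x}}_k).$$
   Context: These are the corner equations for two Bäcklund transformations $F_\lambda,F_\mu$ of the periodic dual Toda lattice $\ddot x_k=\dot x_k(x_{k+1}-2x_k+x_{k-1})$, where $F_\lambda:(x,p)\mapsto(\widetilde x,\widetilde p)$ is given by $e^{p_k}=(\widetilde x_k-x_k)(\lambda+x_k-\widetilde x_{k-1})$, $e^{\widetilde p_k}=(\widetilde x_k-x_k)(\lambda+x_{k+1}-\widetilde x_k)$; hats denote the action of $F_\mu$. *)

From HB Require Import structures.
From mathcomp Require Import all_boot all_order all_algebra.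
From mathcomp Require Import reals Rstruct.
From mathcomp Require Import complex.
Set Implicit Arguments. Unset Strict Implicit. Unset Printing Implicit Defensive.
Import Order.TTheory GRing.Theory Num.Theory.
Local Open Scope ring_scope.

Definition C : fieldType := complex Rdefinitions.R.

(* Periodic indices: 'I_N with cyclic successor / predecessor (k+1, k-1 mod N). *)
Notation "k '.+1m'" := (ordS k) (at level 2, format "k .+1m").
Notation "k '.-1m'" := (ord_pred k) (at level 2, format "k .-1m").


Definition corner_E (N : nat) (lam mu : C) (x xt xh : 'I_N -> C) (k : 'I_N) : Prop :=
  (xt k - x k) * (lam + x k - xt k.-1m) = (xh k - x k) * (mu + x k - xh k.-1m).
Definition corner_S1 (N : nat) (lam mu : C) (x xt xh xht : 'I_N -> C) (k : 'I_N) : Prop :=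
  (xht k - xh k) * (lam + x k.+1m - xt k) = (xht k - xt k) * (mu + x k.+1m - xh k).
Definition corner_S2 (N : nat) (lam mu : C) (x xt xh xht : 'I_N -> C) (k : 'I_N) : Prop :=
  (xt k.+1m - x k.+1m) * (lam + xh k.+1m - xht k)
  = (xh k.+1m - x k.+1m) * (mu + xt k.+1m - xht k).
Definition corner_E1 (N : nat) (lam mu : C) (x xt xh xht : 'I_N -> C) (k : 'I_N) : Prop :=
  (xt k - x k) * (lam + x k.+1m - xt k) = (xht k - xt k) * (mu + xt k - xht k.-1m).
Definition corner_E2 (N : nat) (lam mu : C) (x xt xh xht : 'I_N -> C) (k : 'I_N) : Prop :=
  (xh k - x k) * (mu + x k.+1m - xh k) = (xht k - xh k) * (lam + xh k - xht k.-1m).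
Definition corner_E12 (N : nat) (lam mu : C) (x xt xh xht : 'I_N -> C) (k : 'I_N) : Prop :=
  (xht k - xh k) * (lam + xh k.+1m - xht k) = (xht k - xt k) * (mu + xt k.+1m - xht k).

(* Non-degeneracy: the factors that equal exp(p_k), exp(p~_k) for F_lambda
   (x -> xt) and for F_mu (x -> xh) are nonzero. *)
Definition nondeg (N : nat) (lam mu : C) (x xt xh : 'I_N -> C) (k : 'I_N) : Prop :=
  (xt k - x k != 0) /\ (lam + x k - xt k.-1m != 0) /\ (lam + x k.+1m - xt k != 0) /\
  (xh k - x k != 0) /\ (mu + x k - xh k.-1m != 0) /\ (mu + x k.+1m - xh k != 0).

From HB Require Import structures.
From mathcomp Require Import all_boot all_order all_algebra.
From mathcomp Require Import reals Rstruct complex.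
From mathcomp Require Import ring.
Set Implicit Arguments. Unset Strict Implicit. Unset Printing Implicit Defensive.
Import GRing.Theory.
Local Open Scope ring_scope.

(* Everything is local: at a site k only the values of the four fields at k
   and at one neighbour enter.  Each conclusion, multiplied by a factor that
   the non-degeneracy conditions keep nonzero, is a polynomial combination of
   the hypotheses.  The only delicate point is (E_1), where the factors are
   xh_k - xt_k and lam - mu + xh_k - xt_k: their non-vanishing is read off
   (S2) at k-1 and (S1) at k, and this is where lam <> mu is needed. *)

Section CornerAlgebra.
Variable F : fieldType.

(* Suffixes 0, 1 and _prev refer to the sites k, k+1 and k-1. *)

Lemma eq_of_mulf_subr_eq0 (c a b : F) : c != 0 -> (a - b) * c = 0 -> a = b.
Proof. by move=> hc /eqP; rewrite mulf_eq0 (negbTE hc) orbF subr_eq0 => /eqP. Qed.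

Lemma corner_S1_iff_S2 (lam mu x1 xt0 xt1 xh0 xh1 xht0 : F) :
  xh1 - x1 != 0 -> lam + x1 - xt0 != 0 ->
  (xt1 - x1) * (lam + x1 - xt0) = (xh1 - x1) * (mu + x1 - xh0) ->
  (xht0 - xh0) * (lam + x1 - xt0) = (xht0 - xt0) * (mu + x1 - xh0) <->
  (xt1 - x1) * (lam + xh1 - xht0) = (xh1 - x1) * (mu + xt1 - xht0).
Proof.
move=> hB hP /eqP; rewrite -subr_eq0 => /eqP hE.
have key : ((xt1 - x1) * (lam + xh1 - xht0) - (xh1 - x1) * (mu + xt1 - xht0))
             * (lam + x1 - xt0)
         = (xh1 - x1) * ((xht0 - xh0) * (lam + x1 - xt0)
                         - (xht0 - xt0) * (mu + x1 - xh0))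
           + ((xt1 - x1) * (lam + x1 - xt0) - (xh1 - x1) * (mu + x1 - xh0))
             * (lam + x1 - xht0) by ring.
rewrite hE mul0r addr0 in key.
split=> hS.
- by apply: (eq_of_mulf_subr_eq0 hP); rewrite key hS subrr mulr0.
- by apply: (eq_of_mulf_subr_eq0 hB); rewrite mulrC -key hS subrr mul0r.
Qed.

Lemma corner_E12_from_S2 (lam mu x1 xt0 xt1 xh0 xh1 xht0 : F) :
  xt1 - x1 != 0 -> xh1 - x1 != 0 ->
  (xt1 - x1) * (lam + x1 - xt0) = (xh1 - x1) * (mu + x1 - xh0) ->
  (xt1 - x1) * (lam + xh1 - xht0) = (xh1 - x1) * (mu + xt1 - xht0) ->
  (xht0 - xh0) * (lam + xh1 - xht0) = (xht0 - xt0) * (mu + xt1 - xht0).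
Proof.
move=> hA hB /eqP; rewrite -subr_eq0 => /eqP hE /eqP; rewrite -subr_eq0 => /eqP hS2.
apply: (eq_of_mulf_subr_eq0 (mulf_neq0 hA hB)).
transitivity ((xt1 - x1) * (xht0 - xt0)
    * ((xt1 - x1) * (lam + xh1 - xht0) - (xh1 - x1) * (mu + xt1 - xht0))
  + (((xt1 - x1) * (lam + xh1 - xht0) - (xh1 - x1) * (mu + xt1 - xht0))
     - ((xt1 - x1) * (lam + x1 - xt0) - (xh1 - x1) * (mu + x1 - xh0)))
    * (xt1 - x1) * (lam + xh1 - xht0)); first by ring.
by rewrite hS2 hE subrr !(mulr0, mul0r, addr0).
Qed.

Lemma corner_E1_from_S1_S2 (lam mu x0 x1 xt0 xh0 xht0 xht_prev : F) :
  lam != mu -> xt0 - x0 != 0 -> lam + x1 - xt0 != 0 ->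
  (xt0 - x0) * (lam + xh0 - xht_prev) = (xh0 - x0) * (mu + xt0 - xht_prev) ->
  (xht0 - xh0) * (lam + x1 - xt0) = (xht0 - xt0) * (mu + x1 - xh0) ->
  (xt0 - x0) * (lam + x1 - xt0) = (xht0 - xt0) * (mu + xt0 - xht_prev).
Proof.
move=> hlm hA hP /eqP; rewrite -subr_eq0 => /eqP hS2 /eqP; rewrite -subr_eq0 => /eqP hS1.
have hS1D : (xht0 - xt0) * (lam - mu + (xh0 - xt0)) = (xh0 - xt0) * (lam + x1 - xt0).
  by apply/eqP; rewrite -subr_eq0 -hS1; apply/eqP; ring.
have hS2D : (xh0 - xt0) * (mu + xt0 - xht_prev) = (xt0 - x0) * (lam - mu + (xh0 - xt0)).
  by apply/eqP; rewrite -subr_eq0 -oppr_eq0 -hS2; apply/eqP; ring.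
have hht : xh0 - xt0 != 0.
  apply/eqP=> h0; move: hS2D; rewrite h0 mul0r addr0 => /esym/eqP.
  by rewrite mulf_eq0 (negbTE hA) subr_eq0 (negbTE hlm).
have hD : lam - mu + (xh0 - xt0) != 0.
  apply/eqP=> D0; move: hS1D; rewrite D0 mulr0 => /esym/eqP.
  by rewrite mulf_eq0 (negbTE hht) (negbTE hP).
apply: (eq_of_mulf_subr_eq0 (mulf_neq0 hht hD)).
transitivity ((xt0 - x0) * (lam - mu + (xh0 - xt0)) * (xh0 - xt0) * (lam + x1 - xt0)
  - (xh0 - xt0) * (mu + xt0 - xht_prev) * ((xht0 - xt0) * (lam - mu + (xh0 - xt0))));
  first by ring.
by rewrite hS1D hS2D; ring.
Qed.

End CornerAlgebra.

Theorem theorem4 (N : nat) (HN : (0 < N)%N) (lam mu : C)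
    (x xt xh xht : 'I_N -> C)
    (Hlm : lam != mu)
    (Hnd : forall k, nondeg lam mu x xt xh k)
    (HE : forall k, corner_E lam mu x xt xh k) :
  (forall k, corner_S1 lam mu x xt xh xht k <-> corner_S2 lam mu x xt xh xht k) /\
  ((forall k, corner_S1 lam mu x xt xh xht k) \/
   (forall k, corner_S2 lam mu x xt xh xht k) ->
   forall k, [/\ corner_E1 lam mu x xt xh xht k, corner_E2 lam mu x xt xh xht k
               & corner_E12 lam mu x xt xh xht k]).
Proof.
have HEsucc k : (xt k.+1m - x k.+1m) * (lam + x k.+1m - xt k)
              = (xh k.+1m - x k.+1m) * (mu + x k.+1m - xh k).
  by have := HE k.+1m; rewrite /corner_E ordSK.
have S1_iff_S2 k : corner_S1 lam mu x xt xh xht k <-> corner_S2 lam mu x xt xh xht k.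
  have [_ [_ [hP _]]] := Hnd k; have [_ [_ [_ [hB _]]]] := Hnd k.+1m.
  exact: corner_S1_iff_S2 hB hP (HEsucc k).
split=> // hS; have S1 k : corner_S1 lam mu x xt xh xht k.
  by case: hS => // hS2; apply/S1_iff_S2.
have S2 k : corner_S2 lam mu x xt xh xht k by apply/S1_iff_S2.
move=> k; have := S2 k.-1m; rewrite /corner_S2 ord_predK => S2pred.
have [hA [_ [hP [hB [_ hQ]]]]] := Hnd k; have [hA1 [_ [_ [hB1 _]]]] := Hnd k.+1m.
split.
- exact: corner_E1_from_S1_S2 Hlm hA hP S2pred (S1 k).
- by apply: corner_E1_from_S1_S2 _ hB hQ (esym S2pred) (esym (S1 k)); rewrite eq_sym.
- exact: corner_E12_from_S2 hA1 hB1 (HEsucc k) (S2 k).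
Qed.
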